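(* Let $B$ be an admissible Banach sequence space, $X$ a Banach space, $\|\cdot\|_m$ ($m\in\mathbb Z$) norms on $X$ each equivalent to the norm of $X$, and $(A_m)_{m\in\mathbb Z}$ a sequence of bounded linear operators on $X$. If $(A_m)_{m\in\mathbb Z}$ admits an exponential dichotomy with respect to the sequence of norms $\|\cdot\|_m$, then the operator $T_B\colon\mathcal D(T_B)\to Y_B$ is bijective (invertible).
   Context: Banach sequence spaces: let $\mathcal S$ be the set of real sequences $(s_n)_{n\in\mathbb Z}$. A linear subspace $B\subset\mathcal S$ with norm $\|\cdot\|_B$ is a normed sequence space if $\mathbf{s}'\in B$ and $|s_n|\le|s'_n|$ for all $n$ imply $\mathbf{s}\in B$ and $\|\mathbf{s}\|_B\le\|\mathbf{s}'\|_B$; it is a Banach sequence space if complete. It is admissible if (i) $\chi_{\{n\}}\in B$ and $\|\chi_{\{n\}}\|_B>0$ for all $n\in\mathbb Z$; (ii) for all $\mathbf{s}\in B$, $m\in\mathbb Z$ the shift $(s_{n+m})_n$ is in $B$ with norm at most $N\|\mathbf{s}\|_B$ for a fixed $N>0$. $Y_B$ is the space of sequences $\mathbf{x}=(x_n)_{n\in\mathbb Z}$ in $X$ with $(\|x_n\|_n)_n\in B$, normed by $\|\mathbf{x}\|_{Y_B}=\|(\|x_n\|_n)_n\|_B$. $T_B$ is defined by $(T_B\mathbf{x})_n=x_n-A_{n-1}x_{n-1}$ on the domain $\mathcal D(T_B)=\{\mathbf{x}\in Y_B: T_B\mathbf{x}\in Y_B\}$. Set $\mathcal A(n,m)=A_{n-1}\cdots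 A_m$ for $n>m$ and $\mathcal A(m,m)=\mathrm{Id}$. The sequence $(A_m)$ admits an exponential dichotomy with respect to the norms $\|\cdot\|_m$ if: (1) there are projections $P_m\colon X\to X$ with $A_mP_m=P_{m+1}A_m$ for all $m$, such that each $A_m|_{\ker P_m}\colon\ker P_m\to\ker P_{m+1}$ is invertible; (2) there are constants $D>0$ and $0<\lambda<1<\mu$ such that for all $x\in X$, $\|\mathcal A(n,m)P_mx\|_n\le D\lambda^{n-m}\|x\|_m$ for $n\ge m$, and $\|\mathcal A(n,m)Q_mx\|_n\le D\mu^{n-m}\|x\|_m$ for $n\le m$, where $Q_m=\mathrm{Id}-P_m$ and, for $n<m$, $\mathcal A(n,m)=(\mathcal A(m,n)|_{\ker P_n})^{-1}\colon\ker P_m\to\ker P_n$. *)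

From Stdlib Require Import Reals ZArith Lra Lia.
Open Scope R_scope.

Record BanachSpace := {
  carrier :> Type;
  vzero : carrier;
  vadd : carrier -> carrier -> carrier;
  vopp : carrier -> carrier;
  vscal : R -> carrier -> carrier;
  vnorm : carrier -> R;
  vadd_assoc : forall x y z, vadd x (vadd y z) = vadd (vadd x y) z;
  vadd_comm : forall x y, vadd x y = vadd y x;
  vadd_zero : forall x, vadd x vzero = x;
  vadd_opp : forall x, vadd x (vopp x) = vzero;
  vscal_one : forall x, vscal 1 x = x;
  vscal_assoc : forall a b x, vscal a (vscal b x) = vscal (a * b) x;
  vscal_distr_l : forall a x y, vscal a (vadd x y) = vadd (vscal a x) (vscal a y);
  vscal_distr_r : forall a b x, vscal (a + b) x = vadd (vscal a x) (vscal b x);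
  vnorm_nonneg : forall x, 0 <= vnorm x;
  vnorm_eq0 : forall x, vnorm x = 0 -> x = vzero;
  vnorm_scal : forall a x, vnorm (vscal a x) = Rabs a * vnorm x;
  vnorm_triangle : forall x y, vnorm (vadd x y) <= vnorm x + vnorm y;
  vcomplete : forall u : nat -> carrier,
    (forall eps, eps > 0 -> exists N, forall p q, (p >= N)%nat -> (q >= N)%nat ->
        vnorm (vadd (u p) (vopp (u q))) < eps) ->
    exists l, forall eps, eps > 0 -> exists N, forall p, (p >= N)%nat ->
        vnorm (vadd (u p) (vopp l)) < eps
}.

Arguments vzero {_}.
Arguments vadd {_} _ _.
Arguments vopp {_} _.
Arguments vscal {_} _ _.
Arguments vnorm {_} _.

Definition vsub {X : BanachSpace} (x y : X) : X := vadd x (vopp y).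

Definition is_norm {X : BanachSpace} (n : X -> R) : Prop :=
  (forall x, 0 <= n x) /\
  (forall x, n x = 0 -> x = vzero) /\
  (forall a x, n (vscal a x) = Rabs a * n x) /\
  (forall x y, n (vadd x y) <= n x + n y).

Definition equiv_to_norm {X : BanachSpace} (n : X -> R) : Prop :=
  exists c C, 0 < c /\ 0 < C /\ forall x, c * vnorm x <= n x /\ n x <= C * vnorm x.

Definition is_linear {X : BanachSpace} (f : X -> X) : Prop :=
  (forall x y, f (vadd x y) = vadd (f x) (f y)) /\
  (forall a x, f (vscal a x) = vscal a (f x)).

Definition bounded_linear {X : BanachSpace} (f : X -> X) : Prop :=
  is_linear f /\ exists C, forall x, vnorm (f x) <= C * vnorm x.

Fixpoint cocycle_nat {X : Type} (A : Z -> X -> X) (m : Z) (k : nat) (x : X) : X :=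
  match k with
  | O => x
  | S k' => A (m + Z.of_nat k')%Z (cocycle_nat A m k' x)
  end.

(* Acal A n m = A_{n-1} o ... o A_m for n >= m, and Id for n = m *)
Definition Acal {X : Type} (A : Z -> X -> X) (n m : Z) : X -> X :=
  cocycle_nat A m (Z.to_nat (n - m)).

Definition exp_dichotomy {X : BanachSpace} (A : Z -> X -> X) (nm : Z -> X -> R) : Prop :=
  exists (P : Z -> X -> X),
    (forall m, is_linear (P m)) /\
    (forall m x, P m (P m x) = P m x) /\
    (forall m x, A m (P m x) = P (m + 1)%Z (A m x)) /\
    (forall m x y, P m x = vzero -> P m y = vzero -> A m x = A m y -> x = y) /\
    (forall m y, P (m + 1)%Z y = vzero -> exists x, P m x = vzero /\ A m x = y) /\
    exists D lambda mu, 0 < D /\ 0 < lambda < 1 /\ 1 < mu /\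
      (forall n m x, (n >= m)%Z ->
         nm n (Acal A n m (P m x)) <= D * powerRZ lambda (n - m) * nm m x) /\
      (* for n <= m, A(n,m) Q_m x is the unique y in ker P_n with A(m,n) y = Q_m x *)
      (forall n m x y, (n <= m)%Z -> P n y = vzero ->
         Acal A m n y = vsub x (P m x) ->
         nm n y <= D * powerRZ mu (n - m) * nm m x).

Definition is_normed_seq_space (inB : (Z -> R) -> Prop) (nB : (Z -> R) -> R) : Prop :=
  inB (fun _ => 0) /\
  (forall s t, inB s -> inB t -> inB (fun n => s n + t n)) /\
  (forall a s, inB s -> inB (fun n => a * s n)) /\
  (forall s, inB s -> 0 <= nB s) /\
  (forall s, inB s -> nB s = 0 -> s = (fun _ => 0)) /\
  (forall a s, inB s -> nB (fun n => a * s n) = Rabs a * nB s) /\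
  (forall s t, inB s -> inB t -> nB (fun n => s n + t n) <= nB s + nB t) /\
  (forall s s', inB s' -> (forall n, Rabs (s n) <= Rabs (s' n)) ->
     inB s /\ nB s <= nB s').

Definition is_banach_seq_space (inB : (Z -> R) -> Prop) (nB : (Z -> R) -> R) : Prop :=
  is_normed_seq_space inB nB /\
  forall u : nat -> (Z -> R), (forall k, inB (u k)) ->
    (forall eps, eps > 0 -> exists N, forall p q, (p >= N)%nat -> (q >= N)%nat ->
        nB (fun n => u p n - u q n) < eps) ->
    exists l, inB l /\ forall eps, eps > 0 -> exists N, forall p, (p >= N)%nat ->
        nB (fun n => u p n - l n) < eps.

Definition chi_single (k : Z) : Z -> R := fun n => if Z.eq_dec n k then 1 else 0.

Definition admissible (inB : (Z -> R) -> Prop) (nB : (Z -> R) -> R) : Prop :=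
  (forall k, inB (chi_single k) /\ nB (chi_single k) > 0) /\
  exists N, N > 0 /\ forall s m, inB s ->
    inB (fun n => s (n + m)%Z) /\ nB (fun n => s (n + m)%Z) <= N * nB s.

Definition inY {X : BanachSpace} (inB : (Z -> R) -> Prop) (nm : Z -> X -> R)
  (x : Z -> X) : Prop := inB (fun n => nm n (x n)).

Definition T_op {X : BanachSpace} (A : Z -> X -> X) (x : Z -> X) : Z -> X :=
  fun n => vsub (x n) (A (n - 1)%Z (x (n - 1)%Z)).

Definition inDomT {X : BanachSpace} (inB : (Z -> R) -> Prop) (nm : Z -> X -> R)
  (A : Z -> X -> X) (x : Z -> X) : Prop :=
  inY inB nm x /\ inY inB nm (T_op A x).

From Stdlib Require Import Reals ZArith Lra Lia ClassicalEpsilon FunctionalExtensionality.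
Open Scope R_scope.

(** Admissibility makes every coordinate functional on [B] bounded, so elements of [Y_B] are
    bounded sequences. If [T_B x = T_B x'], the difference is a bounded orbit
    [z_n = A_(n-1) z_(n-1)]; contraction along [P] forces [P_n z_n = 0], and expansion along
    [Q] then forces [z_n = 0]. For surjectivity take the Green function
    [x_n = sum_(j>=0) A(n,n-j) P_(n-j) y_(n-j) - sum_(j>=0) A(n,n+j+1) Q_(n+j+1) y_(n+j+1)],
    which converges in [X] and solves [T x = y]. With [s_n = |y_n|_n], [|x_n|_n] is dominated
    by [sum_j D lam^j s_(n-j) + D mu^-(j+1) s_(n+j+1)]; since shifts are uniformly bounded
    on [B], this series converges in [B], and solidity puts [x] in [Y_B]. *)

Section VectorAlgebra.
Context {X : BanachSpace}.
Implicit Types a b c d u x y z : X.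

Lemma vadd_0l x : vadd vzero x = x.
Proof. rewrite vadd_comm; apply vadd_zero. Qed.

Lemma vadd_oppl x : vadd (vopp x) x = vzero.
Proof. rewrite vadd_comm; apply vadd_opp. Qed.

Lemma vadd_cancel_l a b c : vadd a b = vadd a c -> b = c.
Proof.
  intro H. rewrite <- (vadd_0l b), <- (vadd_0l c), <- (vadd_oppl a).
  rewrite <- !vadd_assoc, H; reflexivity.
Qed.

Lemma vopp_unique a b : vadd a b = vzero -> vopp a = b.
Proof. intro H. apply (vadd_cancel_l a). rewrite vadd_opp, H; reflexivity. Qed.

Lemma vopp_involutive a : vopp (vopp a) = a.
Proof. apply vopp_unique, vadd_oppl. Qed.

Lemma vopp_zero : vopp (@vzero X) = vzero.
Proof. apply vopp_unique, vadd_zero. Qed.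

Lemma vadd_left_comm a b c : vadd a (vadd b c) = vadd b (vadd a c).
Proof. rewrite !vadd_assoc, (vadd_comm _ a b); reflexivity. Qed.

Lemma vopp_add a b : vopp (vadd a b) = vadd (vopp a) (vopp b).
Proof.
  apply vopp_unique.
  rewrite <- vadd_assoc, (vadd_left_comm b), vadd_opp, vadd_zero, vadd_opp; reflexivity.
Qed.

Lemma vscal_0 x : vscal 0 x = vzero.
Proof.
  apply (vadd_cancel_l (vscal 0 x)).
  rewrite vadd_zero, <- vscal_distr_r, Rplus_0_r; reflexivity.
Qed.

Lemma vscal_m1 x : vscal (-1) x = vopp x.
Proof.
  symmetry. apply vopp_unique. rewrite <- (vscal_one _ x) at 1.
  rewrite <- vscal_distr_r. replace (1 + -1) with 0 by ring. apply vscal_0.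
Qed.

Lemma vsub_diag a : vsub a a = vzero.
Proof. apply vadd_opp. Qed.

Lemma vsub_0r a : vsub a vzero = a.
Proof. unfold vsub. rewrite vopp_zero. apply vadd_zero. Qed.

Lemma vsub_eq0 a b : vsub a b = vzero -> a = b.
Proof.
  unfold vsub; intro H. apply vopp_unique in H.
  rewrite <- (vopp_involutive a), H. apply vopp_involutive.
Qed.

Lemma vsub_opp a b : vsub b a = vopp (vsub a b).
Proof. unfold vsub. rewrite vopp_add, vopp_involutive, vadd_comm. reflexivity. Qed.

Lemma vadd_sub_cancel_l c a : vsub (vadd c a) c = a.
Proof. unfold vsub. rewrite (vadd_comm _ c), <- vadd_assoc, vadd_opp, vadd_zero. reflexivity. Qed.

Lemma vadd_vsub a b : vadd a (vsub b a) = b.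
Proof. unfold vsub. rewrite vadd_left_comm, vadd_opp, vadd_zero. reflexivity. Qed.

Lemma vsub_add_vsub x y z : vadd (vsub x y) (vsub y z) = vsub x z.
Proof.
  unfold vsub. rewrite <- vadd_assoc. f_equal.
  rewrite vadd_assoc, vadd_oppl, vadd_0l. reflexivity.
Qed.

Lemma vsub_add_cancel_l c a b : vsub (vadd c a) (vadd c b) = vsub a b.
Proof.
  unfold vsub. rewrite vopp_add, <- !vadd_assoc, (vadd_left_comm a), vadd_assoc, vadd_opp, vadd_0l.
  reflexivity.
Qed.

Lemma vsub_sub_swap a b c d : vsub (vsub a b) (vsub c d) = vsub (vsub a c) (vsub b d).
Proof.
  unfold vsub. rewrite !vopp_add, !vopp_involutive, <- !vadd_assoc.
  f_equal. apply vadd_left_comm.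
Qed.

Lemma vsub_transfer a c u u' : vsub a u = vsub c u' -> vsub a c = vsub u u'.
Proof.
  intro H. apply vsub_eq0. rewrite <- vsub_sub_swap, H. apply vsub_diag.
Qed.

Lemma vsub_sub_sub_add a b c d : vsub (vsub a b) (vsub (vsub a c) (vadd d b)) = vadd c d.
Proof.
  unfold vsub. rewrite !vopp_add, !vopp_involutive, <- !vadd_assoc.
  rewrite (vadd_left_comm (vopp b)), (vadd_left_comm (vopp b) c), vadd_assoc, vadd_opp, vadd_0l.
  f_equal. rewrite (vadd_comm _ d b), vadd_assoc, vadd_oppl, vadd_0l. reflexivity.
Qed.

End VectorAlgebra.

Section LinearMaps.
Context {X : BanachSpace} (f : X -> X).
Hypothesis Hf : is_linear f.

Lemma linear_zero : f vzero = vzero.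
Proof. rewrite <- (vscal_0 vzero), (proj2 Hf), !vscal_0. reflexivity. Qed.

Lemma linear_opp x : f (vopp x) = vopp (f x).
Proof. rewrite <- !vscal_m1, (proj2 Hf). reflexivity. Qed.

Lemma linear_sub x y : f (vsub x y) = vsub (f x) (f y).
Proof. unfold vsub. rewrite (proj1 Hf), linear_opp. reflexivity. Qed.

End LinearMaps.

Section Norms.
Context {X : BanachSpace} (n : X -> R).
Hypothesis Hn : is_norm n.

Lemma norm_zero : n vzero = 0.
Proof.
  destruct Hn as (_ & _ & Hscal & _).
  rewrite <- (vscal_0 vzero), Hscal, Rabs_R0. ring.
Qed.

Lemma norm_opp x : n (vopp x) = n x.
Proof.
  destruct Hn as (_ & _ & Hscal & _).
  rewrite <- vscal_m1, Hscal. replace (Rabs (-1)) with 1 by (rewrite Rabs_left; lra). ring.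
Qed.

Lemma norm_sub_sym x y : n (vsub x y) = n (vsub y x).
Proof. rewrite (vsub_opp x y), norm_opp. reflexivity. Qed.

Lemma norm_sub_le x y : n (vsub x y) <= n x + n y.
Proof. rewrite <- (norm_opp y). apply Hn. Qed.

Lemma norm_le_add_sub x y : n x <= n y + n (vsub x y).
Proof. rewrite <- (vadd_vsub y x) at 1. apply Hn. Qed.

Lemma norm_sub_triangle x y z : n (vsub x z) <= n (vsub x y) + n (vsub y z).
Proof. rewrite <- (vsub_add_vsub x y z). apply Hn. Qed.

Lemma norm_eq0_of_le_eps x : (forall eps, eps > 0 -> n x <= eps) -> x = vzero.
Proof.
  intro Hle. destruct Hn as (Hnonneg & Heq0 & _). apply Heq0.
  destruct (Rle_lt_or_eq_dec 0 (n x) (Hnonneg x)) as [Hpos|]; [|auto].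
  specialize (Hle (n x / 2) ltac:(lra)). lra.
Qed.

End Norms.

Lemma vnorm_is_norm (X : BanachSpace) : is_norm (@vnorm X).
Proof.
  repeat split; [apply vnorm_nonneg | apply vnorm_eq0 | apply vnorm_scal | apply vnorm_triangle].
Qed.

Lemma geometric_tail_lt K r eps : 0 <= K -> 0 <= r < 1 -> eps > 0 ->
  exists N, forall q, (q >= N)%nat -> K * r ^ q / (1 - r) < eps.
Proof.
  intros HK Hr Heps.
  destruct (pow_lt_1_zero r ltac:(rewrite Rabs_right; lra) (eps * (1 - r) / (K + 1))) as [N HN].
  { apply Rdiv_lt_0_compat; [apply Rmult_lt_0_compat|]; lra. }
  exists N. intros q Hq. specialize (HN q Hq).
  rewrite Rabs_right in HN by (apply Rle_ge, pow_le; lra).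
  apply (Rmult_lt_reg_r (1 - r)); [lra|].
  unfold Rdiv. rewrite Rmult_assoc, Rinv_l, Rmult_1_r by lra.
  assert (K * r ^ q <= K * (eps * (1 - r) / (K + 1))) by (apply Rmult_le_compat_l; lra).
  assert (K * (eps * (1 - r) / (K + 1)) < eps * (1 - r)).
  { apply (Rmult_lt_reg_r (K + 1)); [lra|]. field_simplify; nra. }
  lra.
Qed.

Lemma geometric_le_eventually K r eps : 0 <= K -> 0 <= r < 1 -> eps > 0 ->
  exists j, K * r ^ j <= eps.
Proof.
  intros HK Hr Heps. destruct (geometric_tail_lt K r eps HK Hr Heps) as [N HN].
  exists N. specialize (HN N (le_n N)).
  assert (0 <= K * r ^ N) by (apply Rmult_le_pos; [lra | apply pow_le; lra]).
  assert (K * r ^ N <= K * r ^ N / (1 - r)).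
  { unfold Rdiv. rewrite <- (Rmult_1_r (K * r ^ N)) at 1.
    apply Rmult_le_compat_l; [lra|]. rewrite <- Rinv_1. apply Rinv_le_contravar; lra. }
  lra.
Qed.

Lemma geometric_cauchy (d : nat -> nat -> R) K r : 0 <= K -> 0 <= r < 1 ->
  (forall p, d p p = 0) -> (forall p q, d p q = d q p) ->
  (forall p q t, d p t <= d p q + d q t) -> (forall p, d (S p) p <= K * r ^ p) ->
  forall eps, eps > 0 -> exists N, forall p q, (p >= N)%nat -> (q >= N)%nat -> d p q < eps.
Proof.
  intros HK Hr Hdiag Hsym Htri Hstep eps Heps.
  assert (Hblock : forall q k, d (q + k)%nat q <= K * r ^ q * (1 - r ^ k) / (1 - r)).
  { intros q k. induction k as [|k IH].
    - rewrite Nat.add_0_r, Hdiag. simpl. right; field; lra.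
    - rewrite Nat.add_succ_r. eapply Rle_trans; [apply (Htri _ (q + k)%nat)|].
      eapply Rle_trans; [apply Rplus_le_compat; [apply Hstep | apply IH]|].
      rewrite pow_add. right. simpl. field. lra. }
  destruct (geometric_tail_lt K r eps HK Hr Heps) as [N HN].
  assert (Hordered : forall p q, (q <= p)%nat -> (q >= N)%nat -> d p q < eps).
  { intros p q Hqp Hq. replace p with (q + (p - q))%nat by lia.
    eapply Rle_lt_trans; [apply Hblock|]. eapply Rle_lt_trans; [|apply (HN q Hq)].
    assert (0 <= r ^ (p - q)) by (apply pow_le; lra).
    assert (0 <= K * r ^ q) by (apply Rmult_le_pos; [lra | apply pow_le; lra]).
    unfold Rdiv. apply Rmult_le_compat_r; [apply Rlt_le, Rinv_0_lt_compat; lra | nra]. }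
  exists N. intros p q Hp Hq. destruct (Nat.le_ge_cases q p).
  - apply Hordered; lia.
  - rewrite Hsym. apply Hordered; lia.
Qed.

Section Convergence.
Context {X : BanachSpace}.

Definition vconv (u : nat -> X) (l : X) : Prop :=
  forall eps, eps > 0 -> exists N, forall p, (p >= N)%nat -> vnorm (vsub (u p) l) < eps.

Definition vlim (u : nat -> X) : X := epsilon (inhabits vzero) (vconv u).

Lemma vlim_spec u : (exists l, vconv u l) -> vconv u (vlim u).
Proof. apply epsilon_spec. Qed.

Lemma vconv_unique u l l' : vconv u l -> vconv u l' -> l = l'.
Proof.
  intros Hl Hl'. apply vsub_eq0, (norm_eq0_of_le_eps vnorm (vnorm_is_norm X)).
  intros eps Heps.
  destruct (Hl (eps / 2) ltac:(lra)) as [N1 HN1]. destruct (Hl' (eps / 2) ltac:(lra)) as [N2 HN2].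
  specialize (HN1 (N1 + N2)%nat ltac:(lia)). specialize (HN2 (N1 + N2)%nat ltac:(lia)).
  pose proof (norm_sub_triangle vnorm (vnorm_is_norm X) l (u (N1 + N2)%nat) l') as Htri.
  rewrite (norm_sub_sym vnorm (vnorm_is_norm X) l (u (N1 + N2)%nat)) in Htri. lra.
Qed.

Lemma vconv_ext u v l : (forall p, u p = v p) -> vconv u l -> vconv v l.
Proof.
  intros Heq Hu eps Heps. destruct (Hu eps Heps) as [N HN].
  exists N. intros p Hp. rewrite <- Heq. auto.
Qed.

Lemma vconv_shift u l : vconv u l -> vconv (fun p => u (S p)) l.
Proof. intros Hu eps Heps. destruct (Hu eps Heps) as [N HN]. exists N. intros p Hp. apply HN. lia. Qed.

Lemma vconv_sub u v a b : vconv u a -> vconv v b -> vconv (fun p => vsub (u p) (v p)) (vsub a b).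
Proof.
  intros Hu Hv eps Heps.
  destruct (Hu (eps / 2) ltac:(lra)) as [N1 HN1]. destruct (Hv (eps / 2) ltac:(lra)) as [N2 HN2].
  exists (N1 + N2)%nat. intros p Hp. rewrite vsub_sub_swap.
  eapply Rle_lt_trans; [apply (norm_sub_le vnorm (vnorm_is_norm X))|].
  specialize (HN1 p ltac:(lia)). specialize (HN2 p ltac:(lia)). lra.
Qed.

Lemma vconv_sub_const u l c : vconv u l -> vconv (fun p => vsub (u p) c) (vsub l c).
Proof.
  intros Hu eps Heps. destruct (Hu eps Heps) as [N HN].
  exists N. intros p Hp. rewrite vsub_sub_swap, vsub_diag, vsub_0r. auto.
Qed.

Lemma vconv_add_const u l c : vconv u l -> vconv (fun p => vadd c (u p)) (vadd c l).
Proof.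
  intros Hu eps Heps. destruct (Hu eps Heps) as [N HN].
  exists N. intros p Hp. rewrite vsub_add_cancel_l. auto.
Qed.

Lemma vconv_bounded_linear f u l : bounded_linear f -> vconv u l -> vconv (fun p => f (u p)) (f l).
Proof.
  intros [Hlin [C HC]] Hu eps Heps.
  destruct (Hu (eps / (Rabs C + 1))) as [N HN].
  { apply Rdiv_lt_0_compat; [lra | pose proof (Rabs_pos C); lra]. }
  exists N. intros p Hp. rewrite <- linear_sub by exact Hlin.
  specialize (HN p Hp). specialize (HC (vsub (u p) l)).
  pose proof (Rabs_pos C).
  assert (C * vnorm (vsub (u p) l) <= Rabs C * vnorm (vsub (u p) l)).
  { apply Rmult_le_compat_r; [apply vnorm_nonneg | apply Rle_abs]. }
  assert (Rabs C * vnorm (vsub (u p) l) <= Rabs C * (eps / (Rabs C + 1))).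
  { apply Rmult_le_compat_l; lra. }
  assert (Rabs C * (eps / (Rabs C + 1)) < eps).
  { apply (Rmult_lt_reg_r (Rabs C + 1)); [lra|]. field_simplify; lra. }
  lra.
Qed.

Lemma norm_le_of_vconv (nrm : X -> R) u x (w : nat -> R) L :
  is_norm nrm -> equiv_to_norm nrm -> vconv u x -> Un_cv w L ->
  (forall p, nrm (u p) <= w p) -> nrm x <= L.
Proof.
  intros Hn [c [C [Hc [HC Hequiv]]]] Hu Hw Hle. apply le_epsilon. intros eps Heps.
  destruct (Hu (eps / (2 * C))) as [N1 HN1]; [apply Rdiv_lt_0_compat; lra|].
  destruct (Hw (eps / 2)) as [N2 HN2]; [lra|].
  set (p := (N1 + N2)%nat).
  specialize (HN1 p ltac:(unfold p; lia)). specialize (HN2 p ltac:(unfold p; lia)).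
  unfold R_dist in HN2. pose proof (Rle_abs (w p - L)).
  pose proof (norm_le_add_sub nrm Hn x (u p)) as Hsplit.
  rewrite (norm_sub_sym nrm Hn) in Hsplit.
  pose proof (proj2 (Hequiv (vsub (u p) x))).
  assert (C * vnorm (vsub (u p) x) <= eps / 2).
  { replace (eps / 2) with (C * (eps / (2 * C))) by (field; lra). apply Rmult_le_compat_l; lra. }
  pose proof (Hle p). lra.
Qed.

Fixpoint vsum (f : nat -> X) (p : nat) : X :=
  match p with O => vzero | S p => vadd (vsum f p) (f p) end.

Lemma vsum_ext f g p : (forall j, f j = g j) -> vsum f p = vsum g p.
Proof. intro Heq. induction p as [|p IH]; simpl; [|rewrite IH, Heq]; reflexivity. Qed.

Lemma vsum_succ_l f p : vsum f (S p) = vadd (f O) (vsum (fun j => f (S j)) p).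
Proof.
  induction p as [|p IH].
  - simpl. rewrite vadd_0l, vadd_zero. reflexivity.
  - change (vsum f (S (S p))) with (vadd (vsum f (S p)) (f (S p))).
    rewrite IH. simpl. rewrite vadd_assoc. reflexivity.
Qed.

Lemma vsum_linear (g : X -> X) f p : is_linear g -> g (vsum f p) = vsum (fun j => g (f j)) p.
Proof.
  intro Hg. induction p as [|p IH]; simpl.
  - apply linear_zero, Hg.
  - rewrite (proj1 Hg), IH. reflexivity.
Qed.

Lemma series_geometric_conv f K r : 0 <= K -> 0 <= r < 1 ->
  (forall j, vnorm (f j) <= K * r ^ j) -> exists l, vconv (vsum f) l.
Proof.
  intros HK Hr Hf. apply vcomplete.
  apply (geometric_cauchy (fun p q => vnorm (vsub (vsum f p) (vsum f q))) K r HK Hr).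
  - intro p. rewrite vsub_diag. apply norm_zero, vnorm_is_norm.
  - intros p q. apply norm_sub_sym, vnorm_is_norm.
  - intros p q t. apply norm_sub_triangle, vnorm_is_norm.
  - intro p. simpl. rewrite vadd_sub_cancel_l. apply Hf.
Qed.

Lemma series_geometric_conv_equiv (nrm : X -> R) f K r : equiv_to_norm nrm -> 0 <= K -> 0 <= r < 1 ->
  (forall j, nrm (f j) <= K * r ^ j) -> exists l, vconv (vsum f) l.
Proof.
  intros [c [C [Hc [_ Hequiv]]]] HK Hr Hf.
  apply (series_geometric_conv f (K / c) r);
    [apply Rmult_le_pos; [lra | apply Rlt_le, Rinv_0_lt_compat; lra] | lra |].
  intro j. apply (Rmult_le_reg_l c); [lra|].
  replace (c * (K / c * r ^ j)) with (K * r ^ j) by (field; lra).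
  eapply Rle_trans; [apply Hequiv | apply Hf].
Qed.

End Convergence.

Section SequenceSpace.
Variables (inB : (Z -> R) -> Prop) (nB : (Z -> R) -> R).
Hypothesis HB : is_normed_seq_space inB nB.

Definition seq_conv (W : nat -> Z -> R) (l : Z -> R) : Prop :=
  forall eps, eps > 0 -> exists N, forall p, (p >= N)%nat -> nB (fun n => W p n - l n) < eps.

Lemma seq_space_sub s t : inB s -> inB t -> inB (fun n => s n - t n).
Proof.
  destruct HB as (_ & Hadd & Hscal & _). intros Hs Ht.
  replace (fun n => s n - t n) with (fun n => s n + (fun k => -1 * t k) n)
    by (apply functional_extensionality; intro; simpl; ring).
  auto.
Qed.

Lemma seq_space_norm_sub_sym s t : inB s -> inB t ->
  nB (fun n => s n - t n) = nB (fun n => t n - s n).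
Proof.
  destruct HB as (_ & _ & _ & _ & _ & Hnscal & _). intros Hs Ht.
  replace (fun n => s n - t n) with (fun n => -1 * (fun k => t k - s k) n)
    by (apply functional_extensionality; intro; simpl; ring).
  rewrite Hnscal by (apply seq_space_sub; auto).
  replace (Rabs (-1)) with 1 by (rewrite Rabs_left; lra). ring.
Qed.

Lemma seq_space_norm_sub_diag s : inB s -> nB (fun n => s n - s n) = 0.
Proof.
  destruct HB as (_ & _ & _ & _ & _ & Hnscal & _). intro Hs.
  replace (fun n => s n - s n) with (fun n => 0 * s n)
    by (apply functional_extensionality; intro; ring).
  rewrite Hnscal, Rabs_R0 by exact Hs. ring.
Qed.

Lemma seq_space_sub_triangle s t u : inB s -> inB t -> inB u ->
  nB (fun n => s n - u n) <= nB (fun n => s n - t n) + nB (fun n => t n - u n).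
Proof.
  destruct HB as (_ & _ & _ & _ & _ & _ & Htri & _). intros Hs Ht Hu.
  replace (fun n => s n - u n) with (fun n => (fun k => s k - t k) n + (fun k => t k - u k) n)
    by (apply functional_extensionality; intro; simpl; ring).
  apply Htri; apply seq_space_sub; auto.
Qed.

Lemma seq_space_solid s t : inB t -> (forall n, 0 <= s n <= t n) -> inB s.
Proof.
  destruct HB as (_ & _ & _ & _ & _ & _ & _ & Hsolid). intros Ht Hst.
  apply (Hsolid s t Ht). intro n. specialize (Hst n).
  rewrite !Rabs_right by lra. lra.
Qed.

(* Solidity gives [|s k| |chi_k| <= |s|], and shift-boundedness [|chi_0| <= N |chi_k|]. *)
Lemma seq_space_coord_bound : admissible inB nB ->
  exists Kc, 0 < Kc /\ forall s k, inB s -> Rabs (s k) <= Kc * nB s.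
Proof.
  intros [Hchi [N [HN Hshift]]].
  destruct HB as (_ & _ & _ & _ & _ & Hnscal & _ & Hsolid).
  destruct (Hchi 0%Z) as [_ Hchi0].
  exists (N / nB (chi_single 0)). split; [apply Rdiv_lt_0_compat; lra|].
  intros s k Hs. destruct (Hchi k) as [Hk Hkpos].
  assert (Hunit : nB (chi_single 0) <= N * nB (chi_single k)).
  { destruct (Hshift (chi_single k) k Hk) as [_ Hle].
    replace (fun n => chi_single k (n + k)%Z) with (chi_single 0) in Hle; [exact Hle|].
    apply functional_extensionality; intro n. unfold chi_single.
    destruct (Z.eq_dec n 0), (Z.eq_dec (n + k) k); auto; lia. }
  assert (Hcoord : Rabs (s k) * nB (chi_single k) <= nB s).
  { destruct (Hsolid (fun n => s k * chi_single k n) s Hs) as [_ Hle].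
    - intro n. unfold chi_single. destruct (Z.eq_dec n k).
      + subst; rewrite Rmult_1_r; lra.
      + rewrite Rmult_0_r, Rabs_R0. apply Rabs_pos.
    - rewrite Hnscal in Hle; auto. }
  pose proof (Rabs_pos (s k)).
  assert (Rabs (s k) * nB (chi_single 0) <= N * nB s) by nra.
  apply (Rmult_le_reg_r (nB (chi_single 0))); [lra|].
  replace (N / nB (chi_single 0) * nB s * nB (chi_single 0)) with (N * nB s) by (field; lra).
  lra.
Qed.

Lemma seq_conv_coord Kc W l k : (forall s k, inB s -> Rabs (s k) <= Kc * nB s) -> 0 < Kc ->
  (forall p, inB (W p)) -> inB l -> seq_conv W l -> Un_cv (fun p => W p k) (l k).
Proof.
  intros Hcoord HKc HW Hl Hconv eps Heps.
  destruct (Hconv (eps / Kc)) as [N HN]; [apply Rdiv_lt_0_compat; lra|].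
  exists N. intros p Hp. unfold R_dist.
  eapply Rle_lt_trans; [apply (Hcoord (fun n => W p n - l n)), seq_space_sub; auto|].
  apply (Rmult_lt_reg_r (/ Kc)); [apply Rinv_0_lt_compat; lra|].
  replace (Kc * nB (fun n => W p n - l n) * / Kc) with (nB (fun n => W p n - l n)) by (field; lra).
  apply HN, Hp.
Qed.

End SequenceSpace.

Lemma seq_space_geometric_conv inB nB (W : nat -> Z -> R) K r : is_banach_seq_space inB nB ->
  0 <= K -> 0 <= r < 1 -> (forall p, inB (W p)) ->
  (forall p, nB (fun n => W (S p) n - W p n) <= K * r ^ p) ->
  exists l, inB l /\ seq_conv nB W l.
Proof.
  intros [HB Hcomplete] HK Hr HW Hstep. apply (Hcomplete W HW).
  apply (geometric_cauchy (fun p q => nB (fun n => W p n - W q n)) K r HK Hr); auto.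
  - intro p. apply (seq_space_norm_sub_diag inB); auto.
  - intros p q. apply (seq_space_norm_sub_sym inB); auto.
  - intros p q t. apply (seq_space_sub_triangle inB); auto.
Qed.

Lemma Rinv_gt1_range mu : 1 < mu -> 0 < / mu < 1.
Proof.
  intro Hmu. split; [apply Rinv_0_lt_compat; lra|].
  rewrite <- Rinv_1. apply Rinv_lt_contravar; lra.
Qed.

Fixpoint green_majorant (D lam mu : R) (s : Z -> R) (p : nat) (n : Z) : R :=
  match p with
  | O => 0
  | S p => green_majorant D lam mu s p n
           + (D * lam ^ p * s (n - Z.of_nat p)%Z + D * (/ mu) ^ S p * s (n + Z.of_nat (S p))%Z)
  end.

Section GreenMajorant.
Variables (inB : (Z -> R) -> Prop) (nB : (Z -> R) -> R) (D lam mu NN : R) (s : Z -> R).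
Hypothesis HB : is_normed_seq_space inB nB.
Hypothesis Hshift : forall s m, inB s ->
  inB (fun n => s (n + m)%Z) /\ nB (fun n => s (n + m)%Z) <= NN * nB s.
Hypothesis Hs : inB s.
Hypothesis HD : 0 < D.
Hypothesis Hlam : 0 < lam < 1.
Hypothesis Hmu : 1 < mu.

Let W := green_majorant D lam mu s.

Lemma green_majorant_in p : inB (W p).
Proof.
  destruct HB as (H0 & Hadd & Hscal & _).
  induction p as [|p IH]; [exact H0|].
  change (W (S p)) with (fun n => W p n
    + (fun k => (fun k => (D * lam ^ p) * (fun i => s (i + - Z.of_nat p)%Z) k) k
              + (fun k => (D * (/ mu) ^ S p) * (fun i => s (i + Z.of_nat (S p))%Z) k) k) n).
  apply Hadd; [exact IH|]. apply Hadd; apply Hscal; apply Hshift, Hs.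
Qed.

Lemma green_majorant_step p :
  nB (fun n => W (S p) n - W p n) <= 2 * D * NN * nB s * Rmax lam (/ mu) ^ p.
Proof.
  destruct HB as (_ & _ & Hscal & Hnonneg & _ & Hnscal & Htri & _).
  pose proof (Rinv_gt1_range mu Hmu) as Hmu'.
  set (r := Rmax lam (/ mu)).
  replace (fun n => W (S p) n - W p n) with
    (fun n => (fun k => (D * lam ^ p) * (fun i => s (i + - Z.of_nat p)%Z) k) n
            + (fun k => (D * (/ mu) ^ S p) * (fun i => s (i + Z.of_nat (S p))%Z) k) n)
    by (apply functional_extensionality; intro n; unfold W; cbn [green_majorant]; unfold Z.sub; ring).
  destruct (Hshift s (- Z.of_nat p)%Z Hs) as [Hin1 Hle1].
  destruct (Hshift s (Z.of_nat (S p)) Hs) as [Hin2 Hle2].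
  eapply Rle_trans; [apply Htri; apply Hscal; assumption|].
  rewrite !Hnscal by assumption.
  assert (Hlam_r : 0 <= lam ^ p <= r ^ p).
  { split; [apply pow_le; lra | apply pow_incr; split; [lra | apply Rmax_l]]. }
  assert (Hmu_r : 0 <= (/ mu) ^ S p <= r ^ p).
  { assert ((/ mu) ^ p <= r ^ p) by (apply pow_incr; split; [lra | apply Rmax_r]).
    assert (0 <= (/ mu) ^ p) by (apply pow_le; lra).
    split; [apply pow_le; lra | simpl; nra]. }
  rewrite !Rabs_right by (apply Rle_ge, Rmult_le_pos; lra).
  pose proof (Hnonneg s Hs). pose proof (Hnonneg _ Hin1). pose proof (Hnonneg _ Hin2).
  assert (D * lam ^ p * nB (fun n => s (n + - Z.of_nat p)%Z) <= D * r ^ p * (NN * nB s)).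
  { apply Rmult_le_compat; [apply Rmult_le_pos | | apply Rmult_le_compat_l |]; lra. }
  assert (D * (/ mu) ^ S p * nB (fun n => s (n + Z.of_nat (S p))%Z) <= D * r ^ p * (NN * nB s)).
  { apply Rmult_le_compat; [apply Rmult_le_pos | | apply Rmult_le_compat_l |]; lra. }
  lra.
Qed.

End GreenMajorant.

Lemma green_majorant_conv inB nB D lam mu s : is_banach_seq_space inB nB -> admissible inB nB ->
  inB s -> 0 < D -> 0 < lam < 1 -> 1 < mu ->
  exists l, inB l /\ seq_conv nB (green_majorant D lam mu s) l.
Proof.
  intros HB [_ [NN [HNN Hshift]]] Hs HD Hlam Hmu.
  pose proof (Rinv_gt1_range mu Hmu).
  pose proof (proj1 (proj2 (proj2 (proj2 (proj1 HB)))) s Hs).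
  apply (seq_space_geometric_conv inB nB _ (2 * D * NN * nB s) (Rmax lam (/ mu)) HB).
  - apply Rmult_le_pos; [|assumption]. nra.
  - split; [eapply Rle_trans; [|apply Rmax_l]; lra | apply Rmax_lub_lt; lra].
  - apply (green_majorant_in inB nB D lam mu NN s (proj1 HB) Hshift Hs).
  - apply (green_majorant_step inB nB D lam mu NN s (proj1 HB) Hshift Hs HD Hlam Hmu).
Qed.

Section CocycleAlgebra.
Context {T : Type} (A : Z -> T -> T).

Lemma Acal_add_nat n d x : Acal A (n + Z.of_nat d)%Z n x = cocycle_nat A n d x.
Proof. unfold Acal. replace (Z.to_nat (n + Z.of_nat d - n)) with d by lia. reflexivity. Qed.

Lemma cocycle_succ_l m d x : cocycle_nat A m (S d) x = cocycle_nat A (m + 1)%Z d (A m x).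
Proof.
  induction d as [|d IH].
  - simpl. rewrite Z.add_0_r. reflexivity.
  - change (cocycle_nat A m (S (S d)) x) with (A (m + Z.of_nat (S d))%Z (cocycle_nat A m (S d) x)).
    rewrite IH. simpl. f_equal. lia.
Qed.

Lemma cocycle_of_orbit (z : Z -> T) : (forall k, z k = A (k - 1)%Z (z (k - 1)%Z)) ->
  forall m d, z (m + Z.of_nat d)%Z = cocycle_nat A m d (z m).
Proof.
  intros Hz m d. induction d as [|d IH].
  - simpl. rewrite Z.add_0_r. reflexivity.
  - change (cocycle_nat A m (S d) (z m)) with (A (m + Z.of_nat d)%Z (cocycle_nat A m d (z m))).
    rewrite Hz, <- IH. replace (m + Z.of_nat (S d) - 1)%Z with (m + Z.of_nat d)%Z by lia.
    reflexivity.
Qed.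

Lemma cocycle_proj_comm (P : Z -> T -> T) : (forall m x, A m (P m x) = P (m + 1)%Z (A m x)) ->
  forall n d x, cocycle_nat A n d (P n x) = P (n + Z.of_nat d)%Z (cocycle_nat A n d x).
Proof.
  intros HAP n d x. induction d as [|d IH]; simpl.
  - rewrite Z.add_0_r. reflexivity.
  - rewrite IH, HAP. f_equal. lia.
Qed.

End CocycleAlgebra.

Section CocycleKernel.
Context {X : BanachSpace} (A P : Z -> X -> X).
Hypothesis HA : forall m, is_linear (A m).
Hypothesis HAP : forall m x, A m (P m x) = P (m + 1)%Z (A m x).

Lemma cocycle_linear m d : is_linear (cocycle_nat A m d).
Proof.
  induction d as [|d IH]; split; intros; simpl; auto.
  - rewrite (proj1 IH), (proj1 (HA _)). reflexivity.
  - rewrite (proj2 IH), (proj2 (HA _)). reflexivity.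
Qed.

Lemma cocycle_inj_ker :
  (forall m x y, P m x = vzero -> P m y = vzero -> A m x = A m y -> x = y) ->
  forall n d x y, P n x = vzero -> P n y = vzero ->
  cocycle_nat A n d x = cocycle_nat A n d y -> x = y.
Proof.
  intros Hinj n d. induction d as [|d IH]; intros x y Hx Hy Heq; simpl in *; [exact Heq|].
  apply IH; auto. apply (Hinj (n + Z.of_nat d)%Z); auto;
    rewrite <- (cocycle_proj_comm A P HAP), ?Hx, ?Hy; apply linear_zero, cocycle_linear.
Qed.

Lemma cocycle_surj_ker :
  (forall m y, P (m + 1)%Z y = vzero -> exists x, P m x = vzero /\ A m x = y) ->
  forall n d y, P (n + Z.of_nat d)%Z y = vzero ->
  exists x, P n x = vzero /\ cocycle_nat A n d x = y.
Proof.
  intros Hsurj n d. induction d as [|d IH]; intros y Hy.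
  - exists y. rewrite Z.add_0_r in Hy. auto.
  - destruct (Hsurj (n + Z.of_nat d)%Z y) as [u [Hu HAu]].
    { replace (n + Z.of_nat d + 1)%Z with (n + Z.of_nat (S d))%Z by lia. exact Hy. }
    destruct (IH u Hu) as [x [Hx Hxu]]. exists x. split; [exact Hx|]. simpl. rewrite Hxu. exact HAu.
Qed.

End CocycleKernel.

Lemma powerRZ_opp_nat x k : x <> 0 -> powerRZ x (- Z.of_nat k) = (/ x) ^ k.
Proof.
  intro Hx. destruct k as [|k]; [reflexivity|].
  rewrite pow_inv. simpl. rewrite SuccNat2Pos.id_succ. reflexivity.
Qed.

Section Dichotomy.
Context {X : BanachSpace} (A P : Z -> X -> X) (nm : Z -> X -> R) (D lam mu : R).
Hypothesis HA : forall m, bounded_linear (A m).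
Hypothesis Hnm : forall m, is_norm (nm m) /\ equiv_to_norm (nm m).
Hypothesis HP : forall m, is_linear (P m).
Hypothesis HPP : forall m x, P m (P m x) = P m x.
Hypothesis HAP : forall m x, A m (P m x) = P (m + 1)%Z (A m x).
Hypothesis HAinj : forall m x y, P m x = vzero -> P m y = vzero -> A m x = A m y -> x = y.
Hypothesis HAsurj : forall m y, P (m + 1)%Z y = vzero -> exists x, P m x = vzero /\ A m x = y.
Hypothesis HD : 0 < D.
Hypothesis Hlam : 0 < lam < 1.
Hypothesis Hmu : 1 < mu.
Hypothesis Hstable : forall n m x, (n >= m)%Z ->
  nm n (Acal A n m (P m x)) <= D * powerRZ lam (n - m) * nm m x.
Hypothesis Hunstable : forall n m x y, (n <= m)%Z -> P n y = vzero ->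
  Acal A m n y = vsub x (P m x) -> nm n y <= D * powerRZ mu (n - m) * nm m x.

Let HAlin m : is_linear (A m) := proj1 (HA m).

Lemma orbit_bound_nonneg (z : Z -> X) M : (forall k, nm k (z k) <= M) -> 0 <= M.
Proof. intro HM. pose proof (proj1 (proj1 (Hnm 0%Z)) (z 0%Z)). pose proof (HM 0%Z). lra. Qed.

Lemma bounded_orbit_stable_zero (z : Z -> X) M : (forall k, z k = A (k - 1)%Z (z (k - 1)%Z)) ->
  (forall k, nm k (z k) <= M) -> forall n, P n (z n) = vzero.
Proof.
  intros Hz HM n. pose proof (orbit_bound_nonneg z M HM) as HM0.
  apply (norm_eq0_of_le_eps (nm n)); [apply Hnm|]. intros eps Heps.
  destruct (geometric_le_eventually (D * M) lam eps) as [j Hj]; [nra | lra | lra |].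
  set (m := (n - Z.of_nat j)%Z). replace n with (m + Z.of_nat j)%Z by (unfold m; lia).
  rewrite (cocycle_of_orbit A z Hz), <- (cocycle_proj_comm A P HAP), <- Acal_add_nat.
  eapply Rle_trans; [apply Hstable; lia|].
  replace (m + Z.of_nat j - m)%Z with (Z.of_nat j) by lia. rewrite <- pow_powerRZ.
  assert (0 <= D * lam ^ j) by (apply Rmult_le_pos; [lra | apply pow_le; lra]).
  pose proof (HM m). nra.
Qed.

Lemma bounded_orbit_zero (z : Z -> X) M : (forall k, z k = A (k - 1)%Z (z (k - 1)%Z)) ->
  (forall k, nm k (z k) <= M) -> forall n, z n = vzero.
Proof.
  intros Hz HM n. pose proof (bounded_orbit_stable_zero z M Hz HM) as HzP.
  pose proof (orbit_bound_nonneg z M HM) as HM0. pose proof (Rinv_gt1_range mu Hmu).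
  apply (norm_eq0_of_le_eps (nm n)); [apply Hnm|]. intros eps Heps.
  destruct (geometric_le_eventually (D * M) (/ mu) eps) as [j Hj]; [nra | lra | lra |].
  pose proof (Hunstable n (n + Z.of_nat j)%Z (z (n + Z.of_nat j)%Z) (z n) ltac:(lia) (HzP n))
    as Hbound.
  rewrite HzP, vsub_0r, Acal_add_nat, <- (cocycle_of_orbit A z Hz) in Hbound.
  specialize (Hbound eq_refl).
  replace (n - (n + Z.of_nat j))%Z with (- Z.of_nat j)%Z in Hbound by lia.
  rewrite powerRZ_opp_nat in Hbound by lra.
  assert (0 <= D * (/ mu) ^ j) by (apply Rmult_le_pos; [lra | apply pow_le; lra]).
  pose proof (HM (n + Z.of_nat j)%Z). nra.
Qed.

Lemma T_op_injective inB nB : is_normed_seq_space inB nB -> admissible inB nB ->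
  forall x x', inDomT inB nm A x -> inDomT inB nm A x' -> T_op A x = T_op A x' -> x = x'.
Proof.
  intros HB Hadm x x' [Hx _] [Hx' _] HT.
  destruct (seq_space_coord_bound inB nB HB Hadm) as [Kc [HKc Hcoord]].
  set (z := fun n => vsub (x n) (x' n)).
  assert (Hz : forall k, z k = A (k - 1)%Z (z (k - 1)%Z)).
  { intro k. unfold z. rewrite linear_sub by apply HAlin.
    apply vsub_transfer. exact (f_equal (fun f => f k) HT). }
  assert (Hbound : forall k, nm k (z k) <=
            Kc * (nB (fun n => nm n (x n)) + nB (fun n => nm n (x' n)))).
  { intro k. unfold z. eapply Rle_trans; [apply norm_sub_le, Hnm|].
    pose proof (Hcoord _ k Hx). pose proof (Hcoord _ k Hx').
    pose proof (Rle_abs (nm k (x k))). pose proof (Rle_abs (nm k (x' k))). lra. }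
  apply functional_extensionality. intro n. apply vsub_eq0. exact (bounded_orbit_zero z _ Hz Hbound n).
Qed.

Definition stable_term (y : Z -> X) (n : Z) (j : nat) : X :=
  cocycle_nat A (n - Z.of_nat j)%Z j (P (n - Z.of_nat j)%Z (y (n - Z.of_nat j)%Z)).

(* [A(n, n+d) Q_(n+d) w], i.e. the preimage of [Q_(n+d) w] in [ker P_n] under [A(n+d, n)]. *)
Definition unstable_preimage (n : Z) (d : nat) (w : X) : X :=
  epsilon (inhabits vzero)
    (fun z => P n z = vzero /\ cocycle_nat A n d z = vsub w (P (n + Z.of_nat d)%Z w)).

Definition unstable_term (y : Z -> X) (n : Z) (j : nat) : X :=
  unstable_preimage n (S j) (y (n + Z.of_nat (S j))%Z).

Definition green_stable (y : Z -> X) (n : Z) : X := vlim (vsum (stable_term y n)).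

Definition green_unstable (y : Z -> X) (n : Z) : X := vlim (vsum (unstable_term y n)).

Lemma unstable_preimage_spec n d w :
  P n (unstable_preimage n d w) = vzero /\
  cocycle_nat A n d (unstable_preimage n d w) = vsub w (P (n + Z.of_nat d)%Z w).
Proof.
  unfold unstable_preimage. apply epsilon_spec, (cocycle_surj_ker A P HAsurj).
  rewrite linear_sub, HPP, vsub_diag by apply HP. reflexivity.
Qed.

Lemma unstable_preimage_unique n d w z : P n z = vzero ->
  cocycle_nat A n d z = vsub w (P (n + Z.of_nat d)%Z w) -> z = unstable_preimage n d w.
Proof.
  intros Hz Hzw. destruct (unstable_preimage_spec n d w) as [Hker Hpre].
  apply (cocycle_inj_ker A P HAlin HAP HAinj n d); auto. rewrite Hzw, Hpre. reflexivity.
Qed.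

Lemma stable_term_0 y n : stable_term y n O = P n (y n).
Proof. unfold stable_term. simpl. rewrite Z.sub_0_r. reflexivity. Qed.

Lemma stable_term_succ y n j : A (n - 1)%Z (stable_term y (n - 1)%Z j) = stable_term y n (S j).
Proof.
  unfold stable_term. replace (n - Z.of_nat (S j))%Z with (n - 1 - Z.of_nat j)%Z by lia.
  simpl. replace (n - 1 - Z.of_nat j + Z.of_nat j)%Z with (n - 1)%Z by lia. reflexivity.
Qed.

Lemma unstable_term_0 y n : A (n - 1)%Z (unstable_term y (n - 1)%Z O) = vsub (y n) (P n (y n)).
Proof.
  unfold unstable_term.
  destruct (unstable_preimage_spec (n - 1)%Z 1 (y (n - 1 + Z.of_nat 1)%Z)) as [_ Hpre].
  replace (n - 1 + Z.of_nat 1)%Z with n in * by lia. simpl in Hpre.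
  rewrite Z.add_0_r in Hpre. exact Hpre.
Qed.

Lemma unstable_term_succ y n j :
  A (n - 1)%Z (unstable_term y (n - 1)%Z (S j)) = unstable_term y n j.
Proof.
  unfold unstable_term. set (w := y (n - 1 + Z.of_nat (S (S j)))%Z).
  destruct (unstable_preimage_spec (n - 1)%Z (S (S j)) w) as [Hker Hpre].
  set (z := unstable_preimage (n - 1)%Z (S (S j)) w) in *.
  replace (y (n + Z.of_nat (S j))%Z) with w by (unfold w; f_equal; lia).
  apply unstable_preimage_unique.
  - replace n with (n - 1 + 1)%Z at 1 by lia. rewrite <- HAP, Hker. apply linear_zero, HAlin.
  - replace n with (n - 1 + 1)%Z at 1 by lia. rewrite <- cocycle_succ_l, Hpre.
    replace (n - 1 + Z.of_nat (S (S j)))%Z with (n + Z.of_nat (S j))%Z by lia. reflexivity.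
Qed.

Lemma stable_term_bound y n j :
  nm n (stable_term y n j) <= D * lam ^ j * nm (n - Z.of_nat j)%Z (y (n - Z.of_nat j)%Z).
Proof.
  unfold stable_term. rewrite <- Acal_add_nat.
  replace (n - Z.of_nat j + Z.of_nat j)%Z with n by lia.
  eapply Rle_trans; [apply Hstable; lia|].
  replace (n - (n - Z.of_nat j))%Z with (Z.of_nat j) by lia.
  rewrite <- pow_powerRZ. right; reflexivity.
Qed.

Lemma unstable_term_bound y n j :
  nm n (unstable_term y n j) <= D * (/ mu) ^ S j * nm (n + Z.of_nat (S j))%Z (y (n + Z.of_nat (S j))%Z).
Proof.
  unfold unstable_term.
  destruct (unstable_preimage_spec n (S j) (y (n + Z.of_nat (S j))%Z)) as [Hker Hpre].
  eapply Rle_trans; [apply (Hunstable n (n + Z.of_nat (S j))%Z); [lia | exact Hker |]|].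
  - rewrite Acal_add_nat. exact Hpre.
  - replace (n - (n + Z.of_nat (S j)))%Z with (- Z.of_nat (S j))%Z by lia.
    rewrite powerRZ_opp_nat by lra. right; reflexivity.
Qed.

Section GreenFunction.
Variables (y : Z -> X) (M : R).
Hypothesis HyM : forall k, nm k (y k) <= M.

Lemma green_stable_conv n : vconv (vsum (stable_term y n)) (green_stable y n).
Proof.
  apply vlim_spec, (series_geometric_conv_equiv (nm n) _ (D * M) lam); [apply Hnm | | lra |].
  - pose proof (orbit_bound_nonneg y M HyM). apply Rmult_le_pos; lra.
  - intro j. eapply Rle_trans; [apply stable_term_bound|].
    assert (0 <= D * lam ^ j) by (apply Rmult_le_pos; [lra | apply pow_le; lra]).
    pose proof (HyM (n - Z.of_nat j)%Z). nra.
Qed.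

Lemma green_unstable_conv n : vconv (vsum (unstable_term y n)) (green_unstable y n).
Proof.
  pose proof (Rinv_gt1_range mu Hmu).
  apply vlim_spec, (series_geometric_conv_equiv (nm n) _ (D * M) (/ mu)); [apply Hnm | | lra |].
  - pose proof (orbit_bound_nonneg y M HyM). apply Rmult_le_pos; lra.
  - intro j. eapply Rle_trans; [apply unstable_term_bound|].
    assert (0 <= (/ mu) ^ j) by (apply pow_le; lra).
    assert (0 <= D * (/ mu) ^ S j <= D * (/ mu) ^ j).
    { simpl. split; [apply Rmult_le_pos; [|apply Rmult_le_pos] | apply Rmult_le_compat_l]; nra. }
    pose proof (HyM (n + Z.of_nat (S j))%Z). pose proof (orbit_bound_nonneg y M HyM).
    pose proof (proj1 (proj1 (Hnm (n + Z.of_nat (S j))%Z)) (y (n + Z.of_nat (S j))%Z)). nra.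
Qed.

Lemma green_stable_rec n :
  A (n - 1)%Z (green_stable y (n - 1)%Z) = vsub (green_stable y n) (P n (y n)).
Proof.
  eapply vconv_unique; [apply (vconv_bounded_linear (A (n - 1)%Z)), green_stable_conv; apply HA|].
  eapply vconv_ext; [|apply vconv_sub_const, vconv_shift, green_stable_conv].
  intro p. cbv beta. rewrite (vsum_linear (A (n - 1)%Z)) by apply HAlin.
  rewrite vsum_succ_l, stable_term_0, vadd_sub_cancel_l.
  apply vsum_ext. intro j. symmetry. apply stable_term_succ.
Qed.

Lemma green_unstable_rec n :
  A (n - 1)%Z (green_unstable y (n - 1)%Z) = vadd (vsub (y n) (P n (y n))) (green_unstable y n).
Proof.
  eapply vconv_unique;
    [apply (vconv_bounded_linear (A (n - 1)%Z)), vconv_shift, green_unstable_conv; apply HA|].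
  eapply vconv_ext; [|apply vconv_add_const, green_unstable_conv].
  intro p. cbv beta. rewrite (vsum_linear (A (n - 1)%Z)) by apply HAlin.
  rewrite vsum_succ_l, unstable_term_0. f_equal.
  apply vsum_ext. intro j. symmetry. apply unstable_term_succ.
Qed.

Lemma T_op_green : T_op A (fun n => vsub (green_stable y n) (green_unstable y n)) = y.
Proof.
  apply functional_extensionality. intro n. unfold T_op.
  rewrite linear_sub by apply HAlin.
  rewrite green_stable_rec, green_unstable_rec, vsub_sub_sub_add. apply vadd_vsub.
Qed.

End GreenFunction.

Lemma green_partial_sum_bound y n p :
  nm n (vsub (vsum (stable_term y n) p) (vsum (unstable_term y n) p))
  <= green_majorant D lam mu (fun k => nm k (y k)) p n.
Proof.
  eapply Rle_trans; [apply norm_sub_le, Hnm|].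
  induction p as [|p IH].
  - simpl. rewrite !(norm_zero (nm n)) by apply Hnm. lra.
  - simpl vsum. cbn [green_majorant].
    destruct (proj1 (Hnm n)) as (_ & _ & _ & Htri).
    pose proof (Htri (vsum (stable_term y n) p) (stable_term y n p)).
    pose proof (Htri (vsum (unstable_term y n) p) (unstable_term y n p)).
    pose proof (stable_term_bound y n p). pose proof (unstable_term_bound y n p). lra.
Qed.

Lemma T_op_surjective inB nB : is_banach_seq_space inB nB -> admissible inB nB ->
  forall y, inY inB nm y -> exists x, inDomT inB nm A x /\ T_op A x = y.
Proof.
  intros HB Hadm y Hy.
  destruct (seq_space_coord_bound inB nB (proj1 HB) Hadm) as [Kc [HKc Hcoord]].
  set (s := fun k => nm k (y k)).
  assert (HyM : forall k, nm k (y k) <= Kc * nB s).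
  { intro k. pose proof (Hcoord s k Hy). pose proof (Rle_abs (s k)). unfold s in *. lra. }
  set (x := fun n => vsub (green_stable y n) (green_unstable y n)).
  assert (HT : T_op A x = y) by exact (T_op_green y _ HyM).
  destruct (green_majorant_conv inB nB D lam mu s HB Hadm Hy HD Hlam Hmu) as [l [Hl Hconv]].
  assert (Hxl : forall n, nm n (x n) <= l n).
  { intro n. apply (norm_le_of_vconv (nm n)
      (fun p => vsub (vsum (stable_term y n) p) (vsum (unstable_term y n) p)) _
      (fun p => green_majorant D lam mu s p n)); try apply Hnm.
    - apply vconv_sub; [apply (green_stable_conv y _ HyM) | apply (green_unstable_conv y _ HyM)].
    - apply (seq_conv_coord inB nB (proj1 HB) Kc); auto.
      destruct Hadm as [_ [NN [_ Hshift]]].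
      intro p. apply (green_majorant_in inB nB D lam mu NN s (proj1 HB) Hshift Hy).
    - intro p. apply green_partial_sum_bound. }
  exists x. split; [split|].
  - apply (seq_space_solid inB nB (proj1 HB) _ l Hl). intro n.
    split; [apply (Hnm n) | apply Hxl].
  - rewrite HT. exact Hy.
  - exact HT.
Qed.

End Dichotomy.

Theorem theorem3p3
  (inB : (Z -> R) -> Prop) (nB : (Z -> R) -> R)
  (X : BanachSpace) (nm : Z -> X -> R) (A : Z -> X -> X)
  (HB : is_banach_seq_space inB nB)
  (HBadm : admissible inB nB)
  (Hnm : forall m, is_norm (nm m) /\ equiv_to_norm (nm m))
  (HA : forall m, bounded_linear (A m))
  (Hdich : exp_dichotomy A nm) :
  (forall x x', inDomT inB nm A x -> inDomT inB nm A x' ->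
      T_op A x = T_op A x' -> x = x') /\
  (forall y, inY inB nm y -> exists x, inDomT inB nm A x /\ T_op A x = y).
Proof.
  destruct Hdich as [P [HP [HPP [HAP [HAinj [HAsurj
    [D [lam [mu [HD [Hlam [Hmu [Hstable Hunstable]]]]]]]]]]]]].
  split.
  - exact (T_op_injective A P nm D lam mu HA Hnm HAP HD Hlam Hmu Hstable Hunstable
             inB nB (proj1 HB) HBadm).
  - exact (T_op_surjective A P nm D lam mu HA Hnm HP HPP HAP HAinj HAsurj HD Hlam Hmu
             Hstable Hunstable inB nB HB HBadm).
Qed.
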